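(* Let $R$ be an NJ-symmetric ring. If every maximal essential left ideal of $R$ is a two-sided ideal (i.e. $R$ is MELT), then $R$ is left quasi-duo; and (right-hand version) if every maximal essential right ideal of $R$ is a two-sided ideal, then $R$ is right quasi-duo.
   Context: Rings are associative with identity. $N(R)$ is the set of nilpotent elements, $J(R)$ the Jacobson radical. $R$ is NJ-symmetric if for all $a,b,c\in R$, $abc\in N(R)$ implies $bac\in J(R)$. $R$ is left (right) quasi-duo if every maximal left (right) ideal is a two-sided ideal. *)

From mathcomp Require Import all_boot all_algebra.
Set Implicit Arguments. Unset Strict Implicit. Unset Printing Implicit Defensive.
Import GRing.Theory.
Local Open Scope ring_scope.

Section RingNotions.
Variable R : pzRingType.

Definition nilpotent_elt (x : R) : Prop := exists n : nat, x ^+ n = 0.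

Definition is_left_ideal (I : R -> Prop) : Prop :=
  [/\ I 0, (forall x y, I x -> I y -> I (x + y)) & (forall r x, I x -> I (r * x))].

Definition is_right_ideal (I : R -> Prop) : Prop :=
  [/\ I 0, (forall x y, I x -> I y -> I (x + y)) & (forall r x, I x -> I (x * r))].

Definition is_two_sided_ideal (I : R -> Prop) : Prop :=
  is_left_ideal I /\ is_right_ideal I.

Definition is_maximal_left_ideal (M : R -> Prop) : Prop :=
  [/\ is_left_ideal M, (exists x, ~ M x) &
      (forall I, is_left_ideal I -> (forall x, M x -> I x) ->
         (forall x, I x -> M x) \/ (forall x, I x))].

Definition is_maximal_right_ideal (M : R -> Prop) : Prop :=
  [/\ is_right_ideal M, (exists x, ~ M x) &
      (forall I, is_right_ideal I -> (forall x, M x -> I x) ->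
         (forall x, I x -> M x) \/ (forall x, I x))].

Definition is_essential_left_ideal (L : R -> Prop) : Prop :=
  is_left_ideal L /\
  forall I, is_left_ideal I -> (exists x, I x /\ x <> 0) ->
    exists x, I x /\ L x /\ x <> 0.

Definition is_essential_right_ideal (L : R -> Prop) : Prop :=
  is_right_ideal L /\
  forall I, is_right_ideal I -> (exists x, I x /\ x <> 0) ->
    exists x, I x /\ L x /\ x <> 0.

Definition jacobson (x : R) : Prop :=
  forall M, is_maximal_left_ideal M -> M x.

Definition NJ_symmetric : Prop :=
  forall a b c : R, nilpotent_elt (a * b * c) -> jacobson (b * a * c).

Definition MELT : Prop :=
  forall M, is_maximal_left_ideal M -> is_essential_left_ideal M ->
    is_two_sided_ideal M.

Definition MERT : Prop :=
  forall M, is_maximal_right_ideal M -> is_essential_right_ideal M ->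
    is_two_sided_ideal M.

Definition left_quasi_duo : Prop :=
  forall M, is_maximal_left_ideal M -> is_two_sided_ideal M.

Definition right_quasi_duo : Prop :=
  forall M, is_maximal_right_ideal M -> is_two_sided_ideal M.

End RingNotions.

(* If a maximal left ideal M is not essential, it has a nonzero complement I
   with M ∩ I = 0 and M + I = R.  Writing 1 = m + e with m ∈ M and e ∈ I gives
   x e ∈ M ∩ I = 0, hence x = x m, for every x ∈ M.  Then x r = x r m + x (m r e),
   and since r m e = 0, NJ-symmetry puts m r e in J(R) ⊆ M: so M is two-sided.
   Essential maximal left ideals are two-sided by MELT.  The right-hand statement
   is the left one for the opposite ring: NJ-symmetry passes to R^op because
   nilpotency of a product is invariant under rotation of its factors and, by
   Jacobson's lemma, J(R) lies in every maximal right ideal. *)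

From mathcomp Require Import all_boot all_algebra.
From mathcomp Require Import boolp classical_sets.
Set Implicit Arguments. Unset Strict Implicit. Unset Printing Implicit Defensive.
Import GRing.Theory.
Local Open Scope ring_scope.
Local Open Scope classical_set_scope.

Section MaximalLeftIdeals.
Variable R : pzRingType.
Implicit Types (I M : R -> Prop) (u x : R).

Lemma left_idealN I x : is_left_ideal I -> I x -> I (- x).
Proof. by case=> _ _ IM Ix; rewrite -mulN1r; apply: IM. Qed.

Lemma left_ideal1_full I : is_left_ideal I -> I 1 -> forall x, I x.
Proof. by case=> _ _ IM I1 x; rewrite -(mulr1 x); apply: IM. Qed.

Lemma maximal_left_ideal_not1 M : is_maximal_left_ideal M -> ~ M 1.
Proof. by case=> LM [x Mx] _ M1; apply/Mx/(left_ideal1_full LM). Qed.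

Lemma maximal_left_ideal_comaximal M I :
  is_maximal_left_ideal M -> is_left_ideal I -> ~ (forall x, I x -> M x) ->
  exists m e, [/\ M m, I e & m + e = 1].
Proof.
move=> maxM [I0 ID IM] IM_not_sub; have [[M0 MD MM] _ Mmax] := maxM.
pose K x := exists m e, [/\ M m, I e & x = m + e].
have LK : is_left_ideal K.
  split; first by exists 0, 0; rewrite addr0.
  - move=> _ _ [m [e [Mm Ie ->]]] [m' [e' [Mm' Ie' ->]]].
    by exists (m + m'), (e + e'); rewrite addrACA; split; [apply: MD|apply: ID|].
  - move=> r _ [m [e [Mm Ie ->]]].
    by exists (r * m), (r * e); rewrite mulrDr; split; [apply: MM|apply: IM|].
have MK x : M x -> K x by move=> Mx; exists x, 0; rewrite addr0.
have [KM|Kfull] := Mmax K LK MK.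
  by case: IM_not_sub => e Ie; apply: KM; exists 0, e; rewrite add0r.
by have [m [e [Mm Ie /esym me1]]] := Kfull 1; exists m, e.
Qed.

(* Zorn's lemma is applied to the sets closed under addition and left
   multiplication containing no [b] with [b + r * u = 1]: unlike the proper left
   ideals containing [u], this family contains the empty set, so the union of
   every chain, including the empty one, stays in it. *)
Lemma maximal_left_ideal_exists u :
  ~ (exists w, w * u = 1) -> exists M, is_maximal_left_ideal M /\ M u.
Proof.
move=> u_not_linv.
pose P (B : set R) := [/\ forall x y, B x -> B y -> B (x + y),
  forall r x, B x -> B (r * x) & forall b r, B b -> b + r * u <> 1].
have [|A [[AD AM A_avoid] Amax]] := @Zorn_bigcup R P.
  move=> F FP Ftot; split.
  - move=> x y [X FX Xx] [Y FY Yy].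
    have [XY|YX] := Ftot X Y FX FY.
    + by exists Y => //; case: (FP Y FY) => YD _ _; apply: YD => //; apply: XY.
    + by exists X => //; case: (FP X FX) => XD _ _; apply: XD => //; apply: YX.
  - move=> r x [X FX Xx]; exists X => //.
    by case: (FP X FX) => _ XM _; apply: XM.
  - by move=> b r [X FX Xb]; case: (FP X FX) => _ _; apply.
have A_sup B : P B -> A `<=` B -> B `<=` A.
  by move=> PB AB; apply: contrapT => BA; exact: (Amax B (conj AB BA)).
have A0 : A 0.
  apply: (A_sup (fun x => A x \/ x = 0)); [split|by left|by right].
  - by move=> x y [Ax|->] [Ay|->]; rewrite ?addr0 ?add0r; auto.
  - by move=> r x [Ax|->]; [left; apply: AM|right; rewrite mulr0].
  - move=> b r [Ab|->]; first exact: A_avoid.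
    by rewrite add0r => ru1; apply: u_not_linv; exists r.
have Au : A u.
  pose B x := exists a r, A a /\ x = a + r * u.
  have PB : P B.
    split.
    - move=> _ _ [a [r [Aa ->]]] [a' [r' [Aa' ->]]].
      exists (a + a'), (r + r'); rewrite mulrDl addrACA.
      by split => //; apply: AD.
    - move=> s _ [a [r [Aa ->]]].
      by exists (s * a), (s * r); rewrite mulrDr mulrA; split => //; apply: AM.
    - move=> _ s [a [r [Aa ->]]]; rewrite -addrA -mulrDl; exact: A_avoid.
  apply: (A_sup B PB); first by move=> a Aa; exists a, 0; rewrite mul0r addr0.
  by exists 0, 1; rewrite mul1r add0r.
have LA : is_left_ideal A by [].
exists A; split => //; split => //.
  by exists 1 => A1; apply: (A_avoid 1 0) => //; rewrite mul0r addr0.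
move=> I LI AI; have [_ ID IM] := LI.
have [I1|I_not1] := pselect (I 1); first by right; apply: left_ideal1_full.
left; apply: (A_sup I) => //; split => // b r Ib b_ru.
by apply: I_not1; rewrite -b_ru; apply: ID => //; apply/AI/AM.
Qed.

End MaximalLeftIdeals.

Section Jacobson.
Variable R : pzRingType.
Implicit Types (M : R -> Prop) (a b r y z : R).

Lemma jacobson_mull r z : jacobson z -> jacobson (r * z).
Proof. by move=> Jz M maxM; have [[_ _ MM] _ _] := maxM; apply: MM; apply: Jz. Qed.

Lemma jacobson_subr1_linv z : jacobson z -> exists w, w * (1 - z) = 1.
Proof.
move=> Jz; apply: contrapT => no_linv.
have [M [maxM Mz1]] := maximal_left_ideal_exists no_linv.
apply: (maximal_left_ideal_not1 maxM); have [[_ MD _] _ _] := maxM.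
by rewrite -(subrK z 1); apply: MD => //; apply: Jz.
Qed.

Lemma jacobson_subr1_rinv z : jacobson z -> exists w, (1 - z) * w = 1.
Proof.
move=> Jz; have [w wK] := jacobson_subr1_linv Jz.
have w_eq : w = 1 - (- w) * z by rewrite mulNr opprK -{1}wK mulrBr mulr1 subrK.
have [v vK] := jacobson_subr1_linv (jacobson_mull (- w) Jz).
rewrite -w_eq in vK; exists w.
suff -> : 1 - z = v by [].
by rewrite -[RHS]mulr1 -[1 in RHS]wK mulrA vK mul1r.
Qed.

Lemma subr1_rinvC a b :
  (exists w, (1 - b * a) * w = 1) -> exists w, (1 - a * b) * w = 1.
Proof.
move=> [w wK]; exists (1 + a * w * b).
have wba : b * a * w = w - 1 by rewrite -wK mulrBl mul1r opprB addrC subrK.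
have abawb : a * b * (a * w * b) = a * w * b - a * b.
  have -> : a * b * (a * w * b) = a * (b * a * w) * b by rewrite !mulrA.
  by rewrite wba mulrBr mulr1 mulrBl.
by rewrite mulrBl mul1r mulrDr mulr1 abawb [a * b + _]addrC subrK addrK.
Qed.

Lemma jacobson_maximal_right_ideal M y :
  is_maximal_right_ideal M -> jacobson y -> M y.
Proof.
move=> maxM Jy; apply: contrapT => My.
have LyR : is_right_ideal (fun x => exists s, x = y * s).
  split; first by exists 0; rewrite mulr0.
  - by move=> _ _ [s ->] [t ->]; exists (s + t); rewrite mulrDr.
  - by move=> r _ [s ->]; exists (s * r); rewrite mulrA.
have yR_not_sub : ~ (forall x, (exists s, x = y * s) -> M x).
  by move=> yR_sub; apply/My/yR_sub; exists 1; rewrite mulr1.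
have [m [_ [Mm [s ->] m_ys]]] :=
  maximal_left_ideal_comaximal (R := R^c) maxM LyR yR_not_sub.
have [w mw] : exists w : R, (m : R) * w = 1.
  have -> : (m : R) = 1 - y * s by rewrite -[1 : R]m_ys addrK.
  by apply: subr1_rinvC; apply: jacobson_subr1_rinv; apply: jacobson_mull.
have [[_ _ MM] [x Mx] _] := maxM.
by apply: Mx; rewrite -(mul1r x) -mw -mulrA; apply: MM.
Qed.

End Jacobson.

Section Converse.
Variable R : pzRingType.

Lemma nilpotent_mulC (a b : R) : nilpotent_elt (a * b) -> nilpotent_elt (b * a).
Proof.
have baX n : (b * a) ^+ n.+1 = b * (a * b) ^+ n * a.
  elim: n => [|n IHn]; first by rewrite expr1 expr0 mulr1.
  by rewrite exprS IHn [in RHS]exprS !mulrA.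
by case=> n abX0; exists n.+1; rewrite baX abX0 mulr0 mul0r.
Qed.

Lemma nilpotent_elt_converse (x : R) :
  nilpotent_elt (x : R^c) -> nilpotent_elt x.
Proof. by case=> n xX0; exists n; rewrite -revrX. Qed.

Lemma NJ_symmetric_converse : NJ_symmetric R -> NJ_symmetric R^c.
Proof.
move=> NJ a b c /nilpotent_elt_converse cba_nil M maxM.
have acb_nil : nilpotent_elt ((a : R) * c * b).
  by rewrite -mulrA; apply: nilpotent_mulC; rewrite -mulrA; exact: cba_nil.
(* [jacobson] of [R^c] is the intersection of the maximal right ideals of R. *)
change (M ((c : R) * ((a : R) * b))); rewrite mulrA.
have maxM_R : is_maximal_right_ideal (M : R -> Prop) := maxM.
exact: jacobson_maximal_right_ideal maxM_R (NJ a c b acb_nil).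
Qed.

End Converse.

Section LeftQuasiDuo.
Variable R : pzRingType.
Implicit Types (I M : R -> Prop) (e m x : R).

Lemma not_essential_left_ideal M :
  is_left_ideal M -> ~ is_essential_left_ideal M ->
  exists I, [/\ is_left_ideal I, exists x, I x /\ x <> 0
              & forall x, I x -> M x -> x = 0].
Proof.
move=> LM not_essM; apply: contrapT => no_complement; apply: not_essM.
split=> // I LI [x [Ix x0]]; apply: contrapT => IM_triv.
apply: no_complement; exists I; split=> //; first by exists x.
by move=> y Iy My; apply: contrapT => y0; apply: IM_triv; exists y.
Qed.

Lemma disjoint_left_ideals_mulr0 M I m e :
  is_left_ideal M -> is_left_ideal I -> (forall x, I x -> M x -> x = 0) ->
  M m -> I e -> m + e = 1 -> forall x, M x -> x * e = 0.
Proof.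
move=> LM [_ _ IM] MI0 Mm Ie me1 x Mx; apply: MI0; first exact: IM.
have -> : x * e = x - x * m.
  by rewrite -{2}(mulr1 x) -me1 mulrDr [x * m + _]addrC addrK.
have [_ MD MM] := LM.
by apply: MD => //; apply: (left_idealN LM); apply: MM.
Qed.

Lemma NJ_symmetric_MELT_left_quasi_duo :
  NJ_symmetric R -> MELT R -> left_quasi_duo R.
Proof.
move=> NJ melt M maxM; have [LM _ _] := maxM.
have [essM|not_essM] := pselect (is_essential_left_ideal M); first exact: melt.
have [I [LI [a [Ia a0]] MI0]] := not_essential_left_ideal LM not_essM.
have I_not_sub : ~ (forall x, I x -> M x) by move=> IM; apply/a0/MI0/IM.
have [m [e [Mm Ie me1]]] := maximal_left_ideal_comaximal maxM LI I_not_sub.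
have Me0 := disjoint_left_ideals_mulr0 LM LI MI0 Mm Ie me1.
split=> //; have [M0 MD MM] := LM; split=> // r x Mx.
have xm : x * m = x by rewrite -[RHS]mulr1 -me1 mulrDr Me0 ?addr0.
have Jmre : jacobson (m * r * e).
  by apply: (NJ r m e); exists 1%N; rewrite expr1 -mulrA Me0 ?mulr0.
have -> : x * r = x * r * m + x * (m * r * e).
  by rewrite !mulrA xm -mulrDr me1 mulr1.
by apply: MD; apply: MM; [|apply: Jmre].
Qed.

End LeftQuasiDuo.

Lemma NJ_symmetric_MERT_right_quasi_duo (R : pzRingType) :
  NJ_symmetric R -> MERT R -> right_quasi_duo R.
Proof.
move=> /NJ_symmetric_converse NJc mert M maxM.
have [LM RM] : is_two_sided_ideal (M : R^c -> Prop).
  apply: (NJ_symmetric_MELT_left_quasi_duo NJc) maxM => M' maxM' essM'.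
  by have [? ?] := mert M' maxM' essM'; split.
by split.
Qed.

Theorem theorem2p8 (R : pzRingType) :
  NJ_symmetric R ->
  (MELT R -> left_quasi_duo R) /\ (MERT R -> right_quasi_duo R).
Proof.
move=> NJ; split.
- exact: NJ_symmetric_MELT_left_quasi_duo.
- exact: NJ_symmetric_MERT_right_quasi_duo.
Qed.
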